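(* Let $\Gamma$ be a group and let $A$ be a set. Then the map $\Psi \colon \mathcal{N}(\Gamma) \to \mathcal{P}(A^\Gamma)$ defined by $\Psi(N) = \mathrm{Fix}(N)$ is uniformly continuous. Moreover, if $A$ contains at least two elements, then $\Psi$ is a uniform embedding.
   Context: $\mathcal{N}(\Gamma)$ is the set of normal subgroups of $\Gamma$, with the uniform structure induced from the prodiscrete uniform structure on $\mathcal{P}(\Gamma) = \{0,1\}^\Gamma$ (a base of entourages is $\{(N_1,N_2) : N_1 \cap F = N_2 \cap F\}$, $F \subset \Gamma$ finite). $A^\Gamma$ carries the prodiscrete uniform structure and the shift $(\gamma x)(\alpha) = x(\gamma^{-1}\alpha)$, and $\mathrm{Fix}(N) = \{x \in A^\Gamma : \gamma x = x \ \forall \gamma \in N\}$. $\mathcal{P}(A^\Gamma)$ carries the Hausdorff-Bourbaki uniform structure, which has as a base the sets $\widehat{V} = \{(B,C) : C \subset V[B] \text{ and } B \subset V[C]\}$, $V$ an entourage of $A^\Gamma$, where $V[B] = \{x : (x,b) \in V \text{ for some } b \in B\}$. A uniform embedding is an injective map inducing a uniform isomorphism onto its image. *)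

From HB Require Import structures.
From mathcomp Require Import all_boot monoid.
From mathcomp Require Import boolp classical_sets cardinality.

Set Implicit Arguments.
Unset Strict Implicit.
Unset Printing Implicit Defensive.

Local Open Scope classical_set_scope.
Local Open Scope group_scope.

Section Defs.
Variable G : groupType.

Definition normal_subgroup (N : set G) : Prop :=
  [/\ N 1,
      (forall x y, N x -> N y -> N (x * y)),
      (forall x, N x -> N (x^-1)) &
      (forall g n, N n -> N (g^-1 * n * g))].

(* Prodiscrete uniform structure on P(Γ) = {0,1}^Γ, induced on N(Γ):
   basic entourages {(N1,N2) : N1 ∩ F = N2 ∩ F}, F finite. *)
Definition subsets_basic_ent (F : set G) : set (set G * set G) :=
  [set NN | NN.1 `&` F = NN.2 `&` F].

Definition subsets_entourage (U : set (set G * set G)) : Prop :=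
  exists F : set G, finite_set F /\ subsets_basic_ent F `<=` U.

Variable A : Type.

Definition shift (g : G) (x : G -> A) : G -> A := fun a => x (g^-1 * a).

Definition Fix (N : set G) : set (G -> A) :=
  [set x | forall g, N g -> shift g x = x].

Definition conf_basic_ent (F : set G) : set ((G -> A) * (G -> A)) :=
  [set xy | forall g, F g -> xy.1 g = xy.2 g].

Definition conf_entourage (V : set ((G -> A) * (G -> A))) : Prop :=
  exists F : set G, finite_set F /\ conf_basic_ent F `<=` V.

Definition ent_image (V : set ((G -> A) * (G -> A))) (B : set (G -> A))
  : set (G -> A) := [set x | exists2 b, B b & V (x, b)].

Definition hb_hat (V : set ((G -> A) * (G -> A)))
  : set (set (G -> A) * set (G -> A)) :=
  [set BC | BC.2 `<=` ent_image V BC.1 /\ BC.1 `<=` ent_image V BC.2].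

Definition hb_entourage (W : set (set (G -> A) * set (G -> A))) : Prop :=
  exists V, conf_entourage V /\ hb_hat V `<=` W.

Definition Psi_unif_continuous : Prop :=
  forall W, hb_entourage W ->
  exists U, subsets_entourage U /\
    forall N1 N2, normal_subgroup N1 -> normal_subgroup N2 ->
      U (N1, N2) -> W (Fix N1, Fix N2).

Definition Psi_unif_embedding : Prop :=
  (forall N1 N2, normal_subgroup N1 -> normal_subgroup N2 ->
     Fix N1 = Fix N2 -> N1 = N2) /\
  Psi_unif_continuous /\
  (forall U, subsets_entourage U ->
   exists W, hb_entourage W /\
     forall N1 N2, normal_subgroup N1 -> normal_subgroup N2 ->
       W (Fix N1, Fix N2) -> U (N1, N2)).

End Defs.

(* A configuration fixed by N is constant on the right cosets N g.  If N1 and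
   N2 agree on the finite set F F^-1, a configuration fixed by N1 can be
   re-spread along the N2-cosets meeting F (the value on N2 f being its value
   at f) without changing it on F: agreement on F F^-1 is exactly what makes
   this well defined.  Conversely, when A has two values, the indicator of N
   is fixed by N, and any configuration fixed by M that agrees with it at 1
   and g with g in M forces g into N; so Fix determines N ∩ F from
   approximations on F ∪ {1}. *)
From mathcomp Require Import all_boot monoid.
From mathcomp Require Import boolp classical_sets cardinality.

Set Implicit Arguments.
Unset Strict Implicit.
Unset Printing Implicit Defensive.
Local Open Scope classical_set_scope.
Local Open Scope group_scope.

Section FixedConfigurations.
Variables (G : groupType) (A : Type).

Definition subgroup (N : set G) : Prop :=
  [/\ N 1, (forall x y, N x -> N y -> N (x * y)) & (forall x, N x -> N x^-1)].

Lemma normal_subgroup_subgroup N : normal_subgroup N -> subgroup N.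
Proof. by case. Qed.

Lemma FixP (N : set G) (x : G -> A) : subgroup N ->
  Fix N x <-> forall n a, N n -> x (n * a) = x a.
Proof.
move=> [_ _ NV]; split => [xN n a Nn | xN n Nn].
  by have := congr1 (fun y => y a) (xN _ (NV _ Nn)); rewrite /shift invgK.
by apply: funext => a; rewrite /shift xN //; apply: NV.
Qed.

Definition diffs (F : set G) : set G := (fun p => p.1 / p.2) @` (F `*` F).

Lemma diffs_finite F : finite_set F -> finite_set (diffs F).
Proof. by move=> fF; apply: finite_image; apply: finite_setX. Qed.

Section Extension.
Variables (N M F : set G) (x : G -> A).
Hypotheses (sgN : subgroup N) (sgM : subgroup M) (xN : Fix N x).
Hypothesis MdiffsN : forall g, M g -> diffs F g -> N g.

Definition extend_Fix (g : G) : A :=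
  if pselect (exists2 f, F f & M (g / f)) is left h then x (s2val (cid2 h))
  else x 1.

Lemma extend_FixE g f : F f -> M (g / f) -> extend_Fix g = x f.
Proof.
move=> Ff Mgf; rewrite /extend_Fix; case: pselect => [h|[]]; last by exists f.
case: (cid2 h) => f' Ff' Mgf' /=.
have [_ MM MV] := sgM.
have Mf'f : M (f' / f).
  by rewrite -(divgKA g); apply: MM => //; rewrite -invgF; apply: MV.
have := (FixP _ sgN).1 xN _ f (MdiffsN Mf'f _); rewrite mulgVK; apply.
by exists (f', f).
Qed.

Lemma extend_Fix_agree g : F g -> extend_Fix g = x g.
Proof. by move=> Fg; apply: extend_FixE; rewrite // mulgV; case: sgM. Qed.

Lemma Fix_extend_Fix : Fix M extend_Fix.
Proof.
have [_ MM MV] := sgM.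
apply/FixP => // n g Mn.
have [[f Ff Mgf]|noF] := pselect (exists2 f, F f & M (g / f)).
  by rewrite !(extend_FixE Ff) // -mulgA; apply: MM.
rewrite /extend_Fix; case: pselect => [[f Ff Mngf]|_]; last by case: pselect.
case: noF; exists f => //.
by rewrite -(mulKg n g) -mulgA; apply: MM => //; apply: MV.
Qed.

End Extension.

Lemma Fix_sub_ent_image (N M F : set G) : subgroup N -> subgroup M ->
  (forall g, M g -> diffs F g -> N g) ->
  Fix N `<=` ent_image (conf_basic_ent F) (@Fix G A M).
Proof.
move=> sgN sgM MdiffsN x xN.
exists (extend_Fix M F x); first exact: (Fix_extend_Fix sgN sgM xN MdiffsN).
by move=> g Fg /=; rewrite (extend_Fix_agree sgN sgM xN MdiffsN Fg).
Qed.

Lemma setI_diffs_hb_hat (N1 N2 F : set G) : subgroup N1 -> subgroup N2 ->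
  N1 `&` diffs F = N2 `&` diffs F ->
  hb_hat (conf_basic_ent F) (@Fix G A N1, Fix N2).
Proof.
move=> sg1 sg2 E; split => /=; apply: Fix_sub_ent_image => // g Ng Dg.
  by have [] : (N2 `&` diffs F) g by rewrite -E.
by have [] : (N1 `&` diffs F) g by rewrite E.
Qed.

Lemma hb_hat_subset (V V' : set ((G -> A) * (G -> A))) :
  V `<=` V' -> hb_hat V `<=` hb_hat V'.
Proof.
move=> VV' [B C] [/= CB BC]; split=> x.
  by move=> /CB [y By /VV' Vxy]; exists y.
by move=> /BC [y By /VV' Vxy]; exists y.
Qed.

Lemma Fix_unif_continuous : Psi_unif_continuous G A.
Proof.
move=> W [V [[F [fF FV]] VW]].
exists (subsets_basic_ent (diffs F)); split.
  by exists (diffs F); split => //; apply: diffs_finite.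
move=> N1 N2 /normal_subgroup_subgroup sg1 /normal_subgroup_subgroup sg2 E.
by apply/VW/(hb_hat_subset FV); apply: setI_diffs_hb_hat.
Qed.

Section Indicator.
Variables (a b : A).
Hypothesis ab : a <> b.

Definition indicator (N : set G) (g : G) : A := if pselect (N g) then a else b.

Lemma Fix_indicator N : subgroup N -> Fix N (indicator N).
Proof.
move=> sgN; have [_ NM NV] := sgN.
apply/FixP => // n g Nn; rewrite /indicator.
case: pselect => [Nng|nNng]; case: pselect => [Ng|nNg] //; exfalso.
  by apply: nNg; rewrite -(mulKg n g); apply: NM => //; apply: NV.
by apply: nNng; apply: NM.
Qed.

Lemma indicator_agree_mem (N M : set G) (y : G -> A) g :
  subgroup N -> subgroup M -> Fix M y -> M g ->
  y 1 = indicator N 1 -> y g = indicator N g -> N g.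
Proof.
move=> sgN sgM yM Mg y1 yg; have [N1 _ _] := sgN.
have := (FixP _ sgM).1 yM g 1 Mg; rewrite mulg1 yg y1 /indicator.
case: pselect => [//|nNg] /=.
by case: pselect => [_|//] /= /esym.
Qed.

Lemma ent_image_Fix_setI (N M F : set G) : subgroup N -> subgroup M ->
  @Fix G A N `<=` ent_image (conf_basic_ent (F `|` [set 1])) (Fix M) ->
  M `&` F `<=` N.
Proof.
move=> sgN sgM S g [Mg Fg].
have [y yM /= agree] := S _ (Fix_indicator sgN).
by apply: (indicator_agree_mem sgN sgM yM Mg); apply/esym/agree; [right|left].
Qed.

Lemma Fix_eq_subset (N M : set G) : subgroup N -> subgroup M ->
  @Fix G A N = Fix M -> M `<=` N.
Proof.
move=> sgN sgM E g Mg; apply: (ent_image_Fix_setI (F := setT) sgN sgM) => //.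
by move=> x xN; exists x; [rewrite -E | move=> ? _].
Qed.

End Indicator.

Lemma Fix_unif_embedding : (exists a b : A, a <> b) -> Psi_unif_embedding G A.
Proof.
move=> [a [b ab]].
have setI_le N M F : normal_subgroup N -> normal_subgroup M ->
    Fix N `<=` ent_image (conf_basic_ent (F `|` [set 1])) (@Fix G A M) ->
    M `&` F `<=` N.
  move=> /normal_subgroup_subgroup sgN /normal_subgroup_subgroup sgM.
  exact: (ent_image_Fix_setI ab sgN sgM).
split; [|split; first exact: Fix_unif_continuous].
  move=> N1 N2 /normal_subgroup_subgroup sg1 /normal_subgroup_subgroup sg2 E.
  apply/seteqP; split; first exact: (Fix_eq_subset ab sg2 sg1 (esym E)).
  exact: (Fix_eq_subset ab sg1 sg2 E).
move=> U [F [fF FU]].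
exists (hb_hat (@conf_basic_ent _ A (F `|` [set 1]))); split.
  exists (conf_basic_ent (F `|` [set 1])); split => //.
  exists (F `|` [set 1]); split => //.
  by rewrite finite_setU; split => //; apply: finite_set1.
move=> N1 N2 sg1 sg2 [S21 S12]; apply: FU => /=.
apply/seteqP; split=> g [Ng Fg]; split=> //.
  exact: (setI_le N2 N1 F sg2 sg1 S21).
exact: (setI_le N1 N2 F sg1 sg2 S12).
Qed.

End FixedConfigurations.

Theorem theorem6p3 (G : groupType) (A : Type) :
  Psi_unif_continuous G A /\
  ((exists a b : A, a <> b) -> Psi_unif_embedding G A).
Proof. by split; [exact: Fix_unif_continuous | exact: Fix_unif_embedding]. Qed.
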